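(* Let $G$ be a strongly connected digraph with $n$ nodes. Then the burning number of $G$ is at most $\left\lceil \sqrt{2n+\tfrac14}-\tfrac12\right\rceil$. This bound is sharp: for every $n\ge1$ there is a strongly connected digraph on $n$ nodes whose burning number equals $\left\lceil \sqrt{2n+\tfrac14}-\tfrac12\right\rceil$.
   Context: Burning process on a digraph $D$: a sequence $(x_1,\ldots,x_b)$ of nodes is a burning sequence for $D$ if after $b$ steps of the following process every node of $D$ is burned; the $i$-th step consists of first burning all out-neighbours of all currently burned nodes, and then burning the node $x_i$. The burning number of $D$ is the length of a shortest burning sequence. Equivalently, with $N^+_k(v)$ the set of nodes reachable from $v$ by a directed path with at most $k$ arcs, the burning number is the least $b$ such that there are nodes $v_1,\ldots,v_b$ with $V(D)=\bigcup_{i=1}^b N^+_{i-1}(v_i)$. *)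

From mathcomp Require Import all_boot all_order all_algebra.
From mathcomp Require Import reals.
Set Implicit Arguments. Unset Strict Implicit. Unset Printing Implicit Defensive.
Import Order.TTheory GRing.Theory Num.Theory.

Definition reach_within (T : finType) (e : rel T) (k : nat) (v u : T) : Prop :=
  exists p : seq T, [/\ path e v p, last v p = u & size p <= k].

(* (x_1,...,x_b) is a burning sequence: V = \bigcup_i N^+_{i-1}(x_i)
   (0-based index i with radius i). *)
Definition burning_seq (T : finType) (e : rel T) (s : seq T) : Prop :=
  forall u : T, exists i : 'I_(size s), reach_within e i (nth u s i) u.

Definition is_burning_number (T : finType) (e : rel T) (b : nat) : Prop :=
  (exists s : seq T, size s = b /\ burning_seq e s) /\
  (forall s : seq T, burning_seq e s -> b <= size s).

Definition strongly_connected (T : finType) (e : rel T) : Prop :=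
  forall x y : T, connect e x y.

Definition burn_bound (R : realType) (n : nat) : int :=
  Num.ceil (Num.sqrt (2 * n%:R + 1 / 4 : R) - 1 / 2)%R.

From mathcomp Require Import all_boot all_order all_algebra.
From mathcomp Require Import reals.
From mathcomp Require Import zify lra.
Import Order.TTheory GRing.Theory Num.Theory.
Set Implicit Arguments. Unset Strict Implicit. Unset Printing Implicit Defensive.

(* Upper bound: fix a node r from which every node is reachable and a
   shortest-path tree rooted at r.  If 2n <= k(k+1), the nodes can be burnt in
   k rounds: when every node has depth at most k, the last source is r;
   otherwise take a deepest node u and its k-th ancestor v, let v be the last
   source (it burns the whole subtree of v, which has depth at most k below v
   and at least k+1 nodes) and recurse with k-1 rounds on the rest, which is
   still closed under taking parents.
   Sharpness: in the directed n-cycle each node has one out-neighbour, so the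
   source of radius i burns at most i+1 nodes and b sources burn at most
   b(b+1)/2 nodes.
   Finally, ceil(sqrt(2n + 1/4) - 1/2) is the least k with 2n <= k(k+1). *)

Lemma triangular_root_subproof n : exists k, n.*2 <= k * k.+1.
Proof. by exists n; nia. Qed.

Definition triangular_root n := ex_minn (triangular_root_subproof n).

Lemma triangular_root_leq n m : (triangular_root n <= m) = (n.*2 <= m * m.+1).
Proof.
rewrite /triangular_root; case: ex_minnP => k k_ok k_min.
by apply/idP/idP => [km | /k_min //]; apply: leq_trans k_ok _; nia.
Qed.

Lemma sqrt_bound_le (R : rcfType) n m :
  (Num.sqrt (2 * n%:R + 1 / 4 : R) - 1 / 2 <= m%:R)%R = (n.*2 <= m * m.+1).
Proof.
have m0 := ler0n R m.
have m_half : (m%:R + 1 / 2 = Num.sqrt ((m%:R + 1 / 2) ^+ 2) :> R)%R.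
  by rewrite sqrtr_sqr ger0_norm //; lra.
rewrite lerBlDr m_half ler_sqrt; last by rewrite exprn_ge0 //; lra.
rewrite -(ler_nat R) -muln2 !natrM -[m.+1]addn1 natrD; apply/idP/idP; lra.
Qed.

Lemma burn_boundE (R : realType) n : burn_bound R n = Posz (triangular_root n).
Proof.
have le_nat m : (burn_bound R n <= Posz m)%R = (triangular_root n <= m).
  by rewrite ceil_le_int triangular_root_leq -(sqrt_bound_le R).
have : (0 <= burn_bound R n)%R.
  by rewrite ceil_ge0 ltrBrDl; apply: lt_le_trans (sqrtr_ge0 _); lra.
case: (burn_bound R n) le_nat => // c le_nat _; congr Posz.
have {}le_nat m : (c <= m) = (triangular_root n <= m) by rewrite -lez_nat.
by apply: anti_leq; rewrite (le_nat (triangular_root n)) -(le_nat c) !leqnn.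
Qed.

Lemma reach_within_mono (T : finType) (e : rel T) i j x y :
  i <= j -> reach_within e i x y -> reach_within e j x y.
Proof. by move=> ij [p [ep lp sp]]; exists p; split=> //; apply: leq_trans ij. Qed.

Section BurnTree.
Variables (T : finType) (e : rel T) (r : T) (par : T -> T) (dep : T -> nat).
Hypothesis dep_root : dep r = 0.
Hypothesis par_arc : forall w, w != r -> e (par w) w.
Hypothesis dep_par : forall w, w != r -> (dep (par w)).+1 = dep w.

Lemma dep_gt0_neq_root w : 0 < dep w -> w != r.
Proof. by apply: contraTneq => ->; rewrite dep_root. Qed.

Lemma dep_iter_par j w : j <= dep w -> dep (iter j par w) = dep w - j.
Proof.
elim: j w => [|j IH] w jw; first by rewrite subn0.
have wr : w != r by apply: dep_gt0_neq_root; lia.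
by rewrite iterSr IH; have := dep_par wr; lia.
Qed.

Lemma reach_iter_par j w : j <= dep w -> reach_within e j (iter j par w) w.
Proof.
elim: j w => [|j IH] w jw; first by exists [::].
have wr : w != r by apply: dep_gt0_neq_root; lia.
have /IH[p [ep lp sp]] : j <= dep (par w) by rewrite -ltnS dep_par.
exists (rcons p w); rewrite rcons_path last_rcons size_rcons iterSr ep lp.
by rewrite par_arc.
Qed.

Lemma reach_from_root w : reach_within e (dep w) r w.
Proof.
suff <- : iter (dep w) par w = r by apply: reach_iter_par.
by apply/eqP; apply: contraT => /dep_par; rewrite dep_iter_par // subnn.
Qed.

Definition ancestor_closed (A : {set T}) := {in A, forall w, w != r -> par w \in A}.

Lemma ancestor_closed_iter A w j :
  ancestor_closed A -> w \in A -> j <= dep w -> iter j par w \in A.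
Proof.
move=> A_cl wA; elim: j => [|j IH] jw //; rewrite iterS.
by apply: A_cl; [apply: IH; lia | apply: dep_gt0_neq_root; rewrite dep_iter_par; lia].
Qed.

Definition subtree v : {set T} :=
  [set w | dep v <= dep w & iter (dep w - dep v) par w == v].

Lemma reach_subtree v w : w \in subtree v -> reach_within e (dep w - dep v) v w.
Proof.
rewrite inE => /andP[vw /eqP anc]; rewrite -[X in reach_within _ _ X]anc.
by apply: reach_iter_par; rewrite leq_subr.
Qed.

Lemma ancestor_closed_setD_subtree A v :
  ancestor_closed A -> ancestor_closed (A :\: subtree v).
Proof.
move=> A_cl w; rewrite !inE => /andP[w_out wA] wr; rewrite A_cl // andbT.
apply: contra w_out => /andP[vp /eqP anc]; have dp := dep_par wr.
by rewrite -dp (leq_trans vp) ?leqW //= subSn // iterSr anc.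
Qed.

Lemma card_subtree_iter_par A u k : ancestor_closed A -> u \in A -> k <= dep u ->
  k < #|A :&: subtree (iter k par u)|.
Proof.
move=> A_cl uA ku; set v := iter k par u.
have anc_dep (j : 'I_k.+1) : j <= dep u by rewrite (leq_trans _ ku) // -ltnS.
have anc_inj : injective (fun j : 'I_k.+1 => iter j par u).
  move=> i j /(congr1 dep)/eqP.
  by rewrite !dep_iter_par // eqn_sub2lE // => /eqP/val_inj.
rewrite -[k.+1]card_ord -(card_imset _ anc_inj); apply: subset_leq_card.
apply/subsetP=> _ /imsetP[j _ ->]; rewrite !inE ancestor_closed_iter //=.
have jk : j <= k by rewrite -ltnS.
rewrite !dep_iter_par // leq_sub2l //= -iterD.
by apply/eqP; congr iter; have := anc_dep j; lia.
Qed.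

Lemma burn_ancestor_closed k A : ancestor_closed A -> (#|A|).*2 <= k * k.+1 ->
  exists s : seq T, size s = k /\
    {in A, forall w, exists2 i, i < k & reach_within e i (nth r s i) w}.
Proof.
elim: k A => [|k IH] A A_cl A_card.
  exists [::]; split=> // w wA.
  by move: A_card; rewrite (cardD1 w) wA.
have [shallow | deep] := boolP [forall w in A, dep w <= k].
  exists (nseq k.+1 r); split; first exact: size_nseq.
  move=> w wA; exists k; rewrite // nth_nseq ltnSn.
  by apply: reach_within_mono (reach_from_root w); apply: (forall_inP shallow).
have [w0 w0A w0k] : exists2 w, w \in A & k < dep w.
  by move: deep; rewrite negb_forall_in => /exists_inP[w wA]; rewrite -ltnNge; exists w.
case: (@arg_maxnP _ w0 (mem A) dep w0A) => u uA u_max.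
have ku : k <= dep u by have := u_max w0 w0A; lia.
set v := iter k par u; have dv : dep v = dep u - k by rewrite dep_iter_par.
have rest_card : (#|A :\: subtree v|).*2 <= k * k.+1.
  have := card_subtree_iter_par A_cl uA ku; rewrite -/v.
  by have := cardsID (subtree v) A; lia.
have [s [size_s burn_s]] := IH _ (ancestor_closed_setD_subtree A_cl) rest_card.
exists (rcons s v); split; first by rewrite size_rcons size_s.
move=> w wA; case w_in: (w \in subtree v).
  exists k; rewrite // nth_rcons size_s ltnn eqxx.
  by apply: reach_within_mono (reach_subtree w_in); have := u_max w wA; lia.
have /burn_s[i ik reach_w] : w \in A :\: subtree v by rewrite inE w_in.
by exists i; [apply: ltnW | rewrite nth_rcons size_s ik].
Qed.

End BurnTree.

Section ShortestPathTree.
Variables (T : finType) (e : rel T) (r : T).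
Hypothesis r_connect : forall w, connect e r w.

Lemma depth_subproof w :
  exists k, [exists t : k.-tuple T, path e r t && (last r t == w)].
Proof.
case/connectP: (r_connect w) => p ep ->; exists (size p).
by apply/existsP; exists (in_tuple p); rewrite /= ep eqxx.
Qed.

Definition depth w := ex_minn (depth_subproof w).

Lemma depth_min p : path e r p -> depth (last r p) <= size p.
Proof.
rewrite /depth => ep; case: ex_minnP => k _; apply.
by apply/existsP; exists (in_tuple p); rewrite /= ep eqxx.
Qed.

Lemma depth_path w : exists p, [/\ path e r p, last r p = w & size p = depth w].
Proof.
rewrite /depth; case: ex_minnP => k /existsP[t /andP[et /eqP lt]] _.
by exists t; rewrite size_tuple.
Qed.

Lemma depth_root : depth r = 0.
Proof. by apply/eqP; rewrite -leqn0; apply: (depth_min (p := [::])). Qed.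

Lemma depth_pred w : w != r -> exists q, e q w && ((depth q).+1 == depth w).
Proof.
move=> wr; have [p [ep lp sp]] := depth_path w.
case/lastP: p ep lp sp => [|p x]; first by move=> _ lp; rewrite -lp eqxx in wr.
rewrite rcons_path last_rcons size_rcons => /andP[ep ex] xw sp; subst x.
exists (last r p); rewrite ex /=; apply/eqP/anti_leq.
have [p' [ep' lp' sp']] := depth_path (last r p).
have := depth_min (p := rcons p' w).
rewrite rcons_path ep' lp' ex last_rcons size_rcons sp' => /(_ isT) ->.
by rewrite andbT -sp ltnS depth_min.
Qed.

Definition parent w := odflt r [pick q | e q w && ((depth q).+1 == depth w)].

Lemma parentP w : w != r -> e (parent w) w /\ (depth (parent w)).+1 = depth w.
Proof.
rewrite /parent => /depth_pred[q qw]; case: pickP => [p /andP[pw /eqP //]|].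
by move/(_ q); rewrite qw.
Qed.

Lemma burning_seq_of_root k : #|T|.*2 <= k * k.+1 ->
  exists s : seq T, size s = k /\ burning_seq e s.
Proof.
rewrite -cardsT => T_card.
have [s [size_s burn_s]] := burn_ancestor_closed depth_root
  (fun w wr => (parentP wr).1) (fun w wr => (parentP wr).2)
  (fun w _ _ => in_setT (parent w)) T_card.
exists s; split=> // u; have [i ik reach_u] := burn_s u (in_setT u).
have ik' : i < size s by rewrite size_s.
by exists (Ordinal ik'); rewrite /= (set_nth_default r).
Qed.

End ShortestPathTree.

Lemma burning_number_le (T : finType) (e : rel T) b :
  strongly_connected e -> is_burning_number e b -> b <= triangular_root #|T|.
Proof.
move=> sc [_ b_min]; have [r _ | T0] := pickP (@predT T).
  have : #|T|.*2 <= triangular_root #|T| * (triangular_root #|T|).+1.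
    by rewrite -triangular_root_leq.
  by case/(burning_seq_of_root (sc r)) => s [<-]; apply: b_min.
suff /b_min : burning_seq e [::] by rewrite leqn0 => /eqP ->.
by move=> u; have := T0 u.
Qed.

Lemma card_big_setU_le (I T : finType) (F : I -> {set T}) :
  #|\bigcup_i F i| <= \sum_i #|F i|.
Proof.
elim/big_rec2: _ => [|i A n _ IH]; first by rewrite cards0.
by rewrite (leq_trans (leq_card_setU _ _).1) ?leq_add2l.
Qed.

Lemma double_sum_ord_succ b : (\sum_(i < b) i.+1).*2 = b * b.+1.
Proof. by elim: b => [|b IH]; rewrite ?big_ord0 // big_ord_recr /= doubleD IH; lia. Qed.

Section FunctionalDigraph.
Variables (T : finType) (e : rel T) (f : T -> T).
Hypothesis e_fun : subrel e (frel f).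

Lemma reach_within_iter k x u :
  reach_within e k x u -> exists2 j, j <= k & u = iter j f x.
Proof.
case=> p [ep <- sp]; elim: p x k ep sp => [|y p IH] x k /=; first by exists 0.
case/andP=> /e_fun /eqP <- ep sp.
have /(IH _ _ ep)[j jk ->] : size p <= k.-1 by lia.
by exists j.+1; [lia | rewrite iterSr].
Qed.

Lemma card_burning_functional s :
  burning_seq e s -> #|T|.*2 <= size s * (size s).+1.
Proof.
move=> burn_s.
pose ball (i : 'I_(size s)) := [set iter j f (tnth (in_tuple s) i) | j : 'I_i.+1].
have cover : [set: T] \subset \bigcup_i ball i.
  apply/subsetP=> u _; have [i reach_u] := burn_s u.
  have [j ji ->] := reach_within_iter reach_u.
  apply/bigcupP; exists i; rewrite // /ball (tnth_nth u).
  by apply/imsetP; exists (Ordinal (ji : j < i.+1)).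
rewrite -double_sum_ord_succ leq_double -cardsT.
apply: leq_trans (subset_leq_card cover) (leq_trans (card_big_setU_le _) _).
by apply: leq_sum => i _; rewrite (leq_trans (leq_imset_card _ _)) ?card_ord.
Qed.

End FunctionalDigraph.

Lemma iter_ordS n k (x : 'I_n) : val (iter k (@ordS n) x) = (x + k) %% n.
Proof.
elim: k => [|k IH]; first by rewrite addn0 modn_small.
by rewrite iterS /= IH -addn1 modnDml -addnA addn1.
Qed.

Lemma ordS_strongly_connected n : strongly_connected (frel (@ordS n)).
Proof.
move=> x y; have xn := ltn_ord x; have yn := ltn_ord y.
suff -> : y = iter (y + (n - x)) (@ordS n) x by apply: fconnect_iter.
apply: val_inj; rewrite iter_ordS.
have -> : x + (y + (n - x)) = y + n by lia.
by rewrite modnDr modn_small.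
Qed.

Lemma burning_number_cycle n :
  is_burning_number (frel (@ordS n.+1)) (triangular_root n.+1).
Proof.
split=> [|s burn_s].
  apply: (burning_seq_of_root (ordS_strongly_connected ord0)).
  by rewrite card_ord -triangular_root_leq.
have := card_burning_functional (fun _ _ => id) burn_s.
by rewrite card_ord triangular_root_leq.
Qed.

Theorem mainTheorem7 (R : realType) :
  (forall (T : finType) (e : rel T), strongly_connected e ->
     forall b : nat, is_burning_number e b -> (Posz b <= burn_bound R #|T|)%R)
  /\
  (forall n : nat, 0 < n ->
     exists (T : finType) (e : rel T), [/\ #|T| = n, strongly_connected e &
       exists b : nat, is_burning_number e b /\ Posz b = burn_bound R n]).
Proof.
split=> [T e sc b b_burn | [//|n] _].
  by rewrite burn_boundE lez_nat; apply: burning_number_le.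
exists 'I_n.+1, (frel (@ordS n.+1)); split; first exact: card_ord.
  exact: ordS_strongly_connected.
exists (triangular_root n.+1); rewrite burn_boundE; split=> //.
exact: burning_number_cycle.
Qed.
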